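(* Let $X$ be a compact Hausdorff space and let $L$ be a normal, distributive and disjunctive lattice. If $X$ has a base $\mathcal B$ for its closed sets that is a sublattice of the lattice of closed subsets of $X$ (containing $\emptyset$ and $X$) and there is a lattice embedding of $\mathcal B$ into $L$, then the Wallman space $wL$ admits a continuous surjection onto $X$.
   Context: Lattices have a least element $\mathbf 0$ and a greatest element $\mathbf 1$, and lattice embeddings are injective maps preserving $\wedge,\vee,\mathbf 0,\mathbf 1$ (for $\mathcal B$: $\cap,\cup,\emptyset,X$). $L$ is disjunctive if whenever $a\not\le b$ there is $c\in L$ with $c\le a$ and $c\wedge b=\mathbf 0$. $L$ is normal if for all $x,y$ with $x\wedge y=\mathbf 0$ there are $u,v$ with $x\wedge u=\mathbf 0$, $y\wedge v=\mathbf 0$ and $u\vee v=\mathbf 1$. The Wallman space $wL$ is the set of ultrafilters (maximal proper filters) of $L$, topologized by taking the sets $\{p\in wL: a\in p\}$, $a\in L$, as a base for the closed sets; it is a compact $T_1$-space, and it is Hausdorff when $L$ is normal. *)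

From HB Require Import structures.
From mathcomp Require Import all_boot all_order.
From mathcomp Require Import boolp classical_sets topology.
Set Implicit Arguments. Unset Strict Implicit. Unset Printing Implicit Defensive.
Import Order.TTheory.
Local Open Scope order_scope.
Local Open Scope classical_set_scope.

Section Wallman.
Context {d : Order.disp_t} (L : tbLatticeType d).

Definition lfilter (F : set L) : Prop :=
  F \top /\ (forall a b, F a -> (a <= b)%O -> F b) /\
  (forall a b, F a -> F b -> F (a `&` b)%O).

Definition proper_lfilter (F : set L) : Prop := lfilter F /\ ~ F \bot.

Definition lultrafilter (F : set L) : Prop :=
  proper_lfilter F /\ (forall G, proper_lfilter G -> F `<=` G -> G = F).

Definition normal_lattice : Prop :=
  forall x y : L, (x `&` y = \bot)%O ->
    exists u v : L, (x `&` u = \bot)%O /\ (y `&` v = \bot)%O /\ (u `|` v = \top)%O.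

Definition disjunctive_lattice : Prop :=
  forall a b : L, ~ (a <= b)%O -> exists c : L, c != \bot /\ (c <= a)%O /\ (c `&` b = \bot)%O.

Definition wallman : Type := {p : set L | lultrafilter p}.

HB.instance Definition _ := gen_eqMixin wallman.
HB.instance Definition _ := gen_choiceMixin wallman.

Definition wallman_index : Type := L.
HB.instance Definition _ := Choice.on wallman_index.
HB.instance Definition _ := isPointed.Build wallman_index (\top : L).

Definition wbasic (a : L) : set wallman := [set p | sval p a].

(* topology whose closed sets have the sets wbasic a as a base, i.e. whose
   open sets are generated by their complements *)
HB.instance Definition _ := @isSubBaseTopological.Build wallman
  wallman_index setT (fun a : wallman_index => ~` wbasic a).

End Wallman.

Section Embed.
Context {T : topologicalType} {d : Order.disp_t} (L : tbLatticeType d).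

Definition closed_base_sublattice (B : set (set T)) : Prop :=
  (forall D, B D -> closed D) /\
  (forall C, closed C -> C = \bigcap_(D in [set D | B D /\ C `<=` D]) D) /\
  (forall D E, B D -> B E -> B (D `&` E)) /\
  (forall D E, B D -> B E -> B (D `|` E)) /\
  B set0 /\ B setT.

Definition lattice_embedding (B : set (set T)) (e : set T -> L) : Prop :=
  {in B &, injective e} /\
  (forall D E, B D -> B E -> e (D `&` E) = (e D `&` e E)%O) /\
  (forall D E, B D -> B E -> e (D `|` E) = (e D `|` e E)%O) /\
  e set0 = \bot /\ e setT = \top.

End Embed.

From HB Require Import structures.
From mathcomp Require Import all_boot all_order.
From mathcomp Require Import boolp classical_sets topology.
From mathcomp Require Import finmap.
Import Order.TTheory.
Local Open Scope order_scope.
Local Open Scope classical_set_scope.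

(* An ultrafilter p of L determines, through the embedding e, a family
   {D in B | e D in p} of closed sets with the finite intersection property;
   by compactness some point f p of X lies in all of them.  Since X is
   regular, every neighbourhood W of f p contains some F in B such that
   E `|` F = X for some E in B missing f p; ultrafilters are prime, so every
   ultrafilter in the basic open set avoiding e E contains e F and is mapped
   into F.  A point x is the image of any ultrafilter extending the filter
   generated by the e D with x in D, which is proper because e is injective. *)

Section LatticeFilters.
Context {d : Order.disp_t} {L : tbLatticeType d}.
Local Open Scope order_scope.
Implicit Types (S F G p : set L) (a : L).

Definition upclosure S : set L := [set a | exists2 s, S s & s <= a].

Lemma upclosure_proper_lfilter S :
  S !=set0 -> (forall s t, S s -> S t -> exists2 u, S u & u <= s `&` t) ->
  ~ S \bot -> proper_lfilter (upclosure S).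
Proof.
move=> [s0 Ss0] Sdir Sbot; split; [split; [|split]|].
- by exists s0 => //; exact: lex1.
- by move=> a b [s Ss sa] ab; exists s => //; exact: le_trans ab.
- move=> a b [s Ss sa] [t St tb]; have [u Su ust] := Sdir s t Ss St.
  by exists u => //; apply: le_trans ust _; exact: leI2.
- by move=> [s Ss]; rewrite lex0 => /eqP sbot; apply: Sbot; rewrite -sbot.
Qed.

Lemma lfilter_chain_bigcup (C : set (set L)) :
  C !=set0 -> (forall G, C G -> proper_lfilter G) -> total_on C subset ->
  proper_lfilter (\bigcup_(G in C) G).
Proof.
move=> [G0 CG0] CP Ctot; split; [split; [|split]|].
- by exists G0 => //; have [[]] := CP G0 CG0.
- move=> a b [G CG Ga] ab; exists G => //.
  by have [[_ [GU _]] _] := CP G CG; exact: GU ab.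
- move=> a b [G1 CG1 G1a] [G2 CG2 G2b].
  have [G12|G21] := Ctot G1 G2 CG1 CG2.
    exists G2 => //; have [[_ [_ GI]] _] := CP G2 CG2.
    by apply: GI => //; exact: G12.
  exists G1 => //; have [[_ [_ GI]] _] := CP G1 CG1.
  by apply: GI => //; exact: G21.
- by move=> [G CG Gbot]; have [_] := CP G CG; apply.
Qed.

Lemma lultrafilter_ex F :
  proper_lfilter F -> exists2 p, lultrafilter p & F `<=` p.
Proof.
move=> PF; have [[FT _] _] := PF.
(* set0 is admitted only to bound the empty chain. *)
pose P := [set G | G = set0 \/ proper_lfilter G /\ F `<=` G].
have [|A [PA Amax]] := @Zorn_bigcup L P.
  move=> C CP Ctot.
  have [Cnil|/existsNP [G0 /not_implyP [CG0 G0nil]]] :=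
    pselect (forall G, C G -> G = set0).
    by left; apply/seteqP; split=> // x [G CG]; rewrite (Cnil G CG).
  have [//|[G0F FG0]] := CP G0 CG0.
  have CPG G x : C G -> G x -> proper_lfilter G.
    by move=> CG Gx; case: (CP G CG) => [Gnil|[]//]; rewrite Gnil in Gx.
  right; split; last by move=> x Fx; exists G0 => //; exact: FG0.
  have -> : \bigcup_(G in C) G =
            \bigcup_(G in (C `&` @proper_lfilter _ L)%classic) G.
    apply/seteqP; split=> x [G CG Gx]; exists G => //; last by case: CG.
    by split => //; exact: CPG Gx.
  apply: lfilter_chain_bigcup; first by exists G0.
  - by move=> G [].
  - by move=> G1 G2 [CG1 _] [CG2 _]; exact: Ctot.
have [A0|[Afil FA]] := PA.
  exfalso; apply: (Amax F); last by right; split.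
  rewrite A0 properEneq; split => //.
  by apply/eqP => /esym F0; rewrite F0 in FT.
exists A => //; split => // G PG AG; apply: contrapT => GA; apply: (Amax G).
  by rewrite properEneq; split => //; apply/eqP => /esym.
by right; split => //; exact: subset_trans AG.
Qed.

Lemma lultrafilter_meet_bot {p a} :
  lultrafilter p -> ~ p a -> exists2 q, p q & q `&` a = \bot.
Proof.
move=> [[[pT [_ pI]] _] pmax] npa; apply: contrapT => nex; apply: npa.
pose G := upclosure [set q `&` a | q in p].
have GF : proper_lfilter G.
  apply: upclosure_proper_lfilter.
  - by exists (\top `&` a), \top.
  - move=> _ _ [q1 p1 <-] [q2 p2 <-]; exists ((q1 `&` q2) `&` a).
      by exists (q1 `&` q2) => //; exact: pI.
    by rewrite meetACA meetxx.
  - by move=> [q pq qa]; apply: nex; exists q.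
have pG : p `<=` G by move=> q pq; exists (q `&` a); [exists q | exact: leIl].
by rewrite -(pmax G GF pG); exists (\top `&` a); [exists \top | rewrite meet1x].
Qed.

End LatticeFilters.

Lemma lultrafilter_prime {d : Order.disp_t} {L : tbDistrLatticeType d}
    {p : set L} {a b : L} :
  lultrafilter p -> p (a `|` b)%O -> p a \/ p b.
Proof.
move=> up pab; apply: contrapT => /not_orP [na nb].
have [q1 p1 q1a] := lultrafilter_meet_bot up na.
have [q2 p2 q2b] := lultrafilter_meet_bot up nb.
have [[[_ [pU pI]] pbot] _] := up.
apply: pbot; apply: (pU ((q1 `&` q2) `&` (a `|` b))%O).
  by apply: (pI) => //; exact: pI.
rewrite meetUr leUx -{1}q1a -q2b.
by apply/andP; split; apply: leI2 => //; [exact: leIl | exact: leIr].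
Qed.

Lemma wbasicC_open {d : Order.disp_t} (L : tbLatticeType d) (a : L) :
  open (~` wbasic a : set (wallman L)).
Proof.
exists [set ~` wbasic a]; last by rewrite bigcup_set1.
move=> _ ->; exists [fset (a : wallman_index L)]%fset.
  by move=> i _; exact: in_setT.
by rewrite set_fset1 bigcap_set1.
Qed.

Lemma compact_directed_bigcap {X : topologicalType} {I : Type}
    (D : set I) (f : I -> set X) :
  compact [set: X] -> D !=set0 ->
  (forall i j, D i -> D j -> exists2 k, D k & f k `<=` f i `&` f j) ->
  (forall i, D i -> closed (f i)) -> (forall i, D i -> f i !=set0) ->
  exists x, forall i, D i -> f i x.
Proof.
move=> cX D0 Ddir Dcl Dne.
have Ffil := filter_from_filter D0 Ddir.
have [x [_]] := cX _ (filter_from_proper Ffil Dne) filterT.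
rewrite clusterE => clx; exists x => i Di.
by have /closure_id -> := Dcl i Di; apply: clx; exists i.
Qed.

Section ClosedBase.
Context {X : topologicalType} {B : set (set X)}.
Hypothesis B_base :
  forall C, closed C -> C = \bigcap_(D in [set D | B D /\ C `<=` D]) D.

Lemma closed_base_separate {C x} :
  closed C -> ~ C x -> exists2 D, B D /\ C `<=` D & ~ D x.
Proof.
move=> cC nCx; apply: contrapT => nD; apply: nCx.
rewrite (B_base _ cC) => D BCD; apply: contrapT => nDx.
exact: nD (ex_intro2 _ _ D BCD nDx).
Qed.

Hypotheses (X_compact : compact [set: X])
  (B_closed : forall D, B D -> closed D).
Hypotheses (B_setI : forall D E, B D -> B E -> B (D `&` E)) (B_setT : B setT).

Lemma closed_base_between {K U} :
  closed K -> open U -> K `<=` U -> exists2 F, B F /\ K `<=` F & F `<=` U.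
Proof.
move=> cK oU KU; apply: contrapT => nF.
have [y yF] : exists y, forall F, B F /\ K `<=` F -> (F `&` ~` U) y.
  apply: (@compact_directed_bigcap X _ _ (fun F => F `&` ~` U) X_compact).
  - by exists setT.
  - move=> F1 F2 [B1 K1] [B2 K2]; exists (F1 `&` F2).
      by split; [exact: B_setI | rewrite subsetI].
    by move=> z [[? ?] ?].
  - by move=> F [BF _]; apply: closedI; [exact: B_closed | exact: open_closedC].
  - move=> F [BF KF]; apply: contrapT => /set0P/negP; rewrite negbK => /eqP FU.
    by apply: nF; exists F => //; move: FU; rewrite disjoints_subset setCK.
have Ky : K y by rewrite (B_base _ cK) => F KF; have [] := yF F KF.
by have [_] := yF setT (conj B_setT (fun _ _ => I)); apply; exact: KU.
Qed.

Hypothesis X_hausdorff : hausdorff_space X.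

Lemma closed_base_cover_nbhs {x W} : nbhs x W ->
  exists E F, [/\ B E, B F, E `|` F = setT, ~ E x & F `<=` W].
Proof.
rewrite nbhsE => -[W0 [oW0 W0x] W0W].
have [O nO clOW0] := compact_regular X_hausdorff X_compact filterT
  (open_nbhs_nbhs (conj oW0 W0x)).
have [E [BE OE] nEx] := closed_base_separate (open_closedC (@open_interior _ O))
  (fun h => h nO).
have [F [BF OF] FW0] := closed_base_between (@closed_closure _ O) oW0 clOW0.
exists E, F; split => //; last exact: subset_trans W0W.
apply/seteqP; split => // z _; have [Ez|nEz] := pselect (E z); [by left|right].
apply/OF/subset_closure/(@interior_subset _ O); apply: contrapT => nOz.
exact: nEz (OE _ nOz).
Qed.

End ClosedBase.

Section WallmanMap.
Context {X : topologicalType} {d : Order.disp_t} {L : tbDistrLatticeType d}.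
Variables (B : set (set X)) (e : set X -> L).
Hypotheses (B_closed : forall D, B D -> closed D)
  (B_setI : forall D E, B D -> B E -> B (D `&` E))
  (B_set0 : B set0) (B_setT : B setT).
Hypotheses (e_inj : {in B &, injective e})
  (e_meet : forall D E, B D -> B E -> e (D `&` E) = (e D `&` e E)%O)
  (e_join : forall D E, B D -> B E -> e (D `|` E) = (e D `|` e E)%O)
  (e_set0 : e set0 = \bot) (e_setT : e setT = \top).

Definition adheres (p : wallman L) (x : X) : Prop :=
  forall D, B D -> sval p (e D) -> D x.

Hypothesis X_compact : compact [set: X].

Lemma adheres_ex (p : wallman L) : exists x, adheres p x.
Proof.
have [[[pT [_ pI]] pbot] _] := svalP p.
have [x px] : exists x, forall D, B D /\ sval p (e D) -> D x.
  apply: (@compact_directed_bigcap X _ _ id X_compact).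
  - by exists setT; rewrite /= e_setT.
  - move=> D1 D2 [B1 p1] [B2 p2]; exists (D1 `&` D2) => //.
    by split; [exact: B_setI | rewrite e_meet //; exact: pI].
  - by move=> D [BD _]; exact: B_closed.
  - move=> D [BD pD]; apply/set0P/eqP => D0.
    by apply: pbot; rewrite -e_set0 -D0.
by exists x => D BD pD; exact: px (conj BD pD).
Qed.

Hypotheses (X_hausdorff : hausdorff_space X)
  (B_base :
    forall C, closed C -> C = \bigcap_(D in [set D | B D /\ C `<=` D]) D).
Variable f : wallman L -> X.
Hypothesis f_adheres : forall p, adheres p (f p).

Lemma wallman_map_continuous : continuous f.
Proof.
move=> p W /= nW.
have [E [F [BE BF EF nEp FW]]] :=
  closed_base_cover_nbhs B_base X_compact B_closed B_setI B_setT X_hausdorff nW.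
apply: (@filterS _ _ _ (~` wbasic (e E))).
  move=> r nEr; have [[[rT _] _] _] := svalP r.
  have : sval r (e E `|` e F)%O by rewrite -e_join // EF e_setT.
  case/(lultrafilter_prime (svalP r)) => [//|rF].
  exact: FW (f_adheres r F BF rF).
apply: open_nbhs_nbhs; split; first exact: wbasicC_open.
by move=> pE; apply: nEp; exact: f_adheres pE.
Qed.

Lemma wallman_map_surjective x : exists p, f p = x.
Proof.
have [p up xp] :
    exists2 p, lultrafilter p & upclosure (e @` [set D | B D /\ D x]) `<=` p.
  apply/lultrafilter_ex/upclosure_proper_lfilter.
  - by exists (e setT), setT.
  - move=> _ _ [D1 [B1 D1x] <-] [D2 [B2 D2x] <-].
    exists (e (D1 `&` D2)); last by rewrite e_meet.
    by exists (D1 `&` D2) => //; split; [exact: B_setI | split].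
  - move=> [D [BD Dx] eD]; have D0 : D = set0.
      by apply: e_inj; [exact: mem_set | exact: mem_set | rewrite e_set0].
    by rewrite D0 in Dx.
exists (exist _ p up); apply: contrapT => fpx.
have x_closed : closed [set x].
  by apply: accessible_closed_set1; exact: hausdorff_accessible.
have [D [BD xD] nD] := closed_base_separate B_base x_closed fpx.
apply/nD/(f_adheres _ _ BD)/xp; exists (e D) => //.
by exists D => //; split => //; exact: xD.
Qed.

End WallmanMap.

Theorem lemma5p2 (X : topologicalType) (d : Order.disp_t)
  (L : tbDistrLatticeType d) :
  compact [set: X] -> hausdorff_space X ->
  normal_lattice L -> disjunctive_lattice L ->
  forall (B : set (set X)) (e : set X -> L),
    closed_base_sublattice B -> lattice_embedding B e ->
  exists f : wallman L -> X, continuous f /\ (forall x : X, exists p : wallman L, f p = x).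
Proof.
move=> cX hX _ _ B e [Bcl [Bbase [BI [_ [B0 BT]]]]] [einj [eI [eU [e0 eT]]]].
have [f f_adheres] := choice (adheres_ex B e Bcl BI BT eI e0 eT cX).
exists f; split.
- exact: wallman_map_continuous B e Bcl BI BT eU eT cX hX Bbase f f_adheres.
- exact: wallman_map_surjective B e BI B0 BT einj eI e0 hX Bbase f f_adheres.
Qed.
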